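(* In the setting where $g=\phi_\eta(\nu)\sigma_h\in\operatorname{Aut}(V_\Lambda)$ has finite order $n>1$ and type $0$, $V_\Lambda^g$ satisfies positivity, $\operatorname{rk}((V_\Lambda^{\mathrm{orb}(g)})_1)=\operatorname{rk}((V_\Lambda^g)_1)>0$, $\phi_\eta(\nu)$ is a standard lift and $h\in\pi_\nu(\Lambda\otimes\mathbb{Q})$: suppose $\Phi(g)$ contains a connected component of affine type with nodes $\alpha_0,\dots,\alpha_l\in\Pi(g)$, and let $a_0,\dots,a_l$ be its Kac labels (the coprime positive integers with $\sum_i a_i\alpha_i=0$). Put $\beta_i=\alpha_i+h\in\tilde\Pi(g)$. Then $$h=\Big(\sum_{i=0}^l a_i\beta_i\Big)\Big/\Big(\sum_{i=0}^l a_i\Big).$$ In particular $h$ is determined by the shifted weights $\tilde\Pi(g)$.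
   Context: $\Lambda$ is the Leech lattice, $V_\Lambda$ its lattice VOA; automorphisms are $\phi_\eta(\nu)\sigma_h$ with $\nu\in\mathrm{O}(\Lambda)$, $\phi_\eta(\nu)$ a lift (standard if $\eta|_{\Lambda^\nu}=1$), $\sigma_h=e^{2\pi ih_0}$; $\pi_\nu$ is the projection onto the $\nu$-fixed subspace of $\Lambda\otimes\mathbb{C}$. $V_\Lambda(g)$ is the unique irreducible $g$-twisted module; type $0$ means its conformal weight lies in $\frac1n\mathbb{Z}$; positivity means every irreducible $V_\Lambda^g$-module other than $V_\Lambda^g$ has positive conformal weight; $V_\Lambda^{\mathrm{orb}(g)}=\bigoplus_{i\in\mathbb{Z}_n}W^{(i,0)}$ is the cyclic orbifold construction. Then $\mathfrak h=(V_\Lambda^g)_1\cong\pi_\nu(\Lambda\otimes\mathbb{C})$ is a Cartan subalgebra of $(V_\Lambda^{\mathrm{orb}(g)})_1$; $\Pi(g)\subseteq\mathfrak h^*\cong\mathfrak h$ is the set of weights of $\mathfrak h$ on $V_\Lambda(g)_1$, $\Phi(g)$ the Dynkin diagram on nodes $\Pi(g)$ with Cartan matrix $2\langle\alpha_i,\alpha_j\rangle/\langle\alpha_i,\alpha_i\rangle$, and $\tilde\Pi(g)=\Pi(g)+h\subseteq\pi_\nu(\Lambda)$ the shifted weights. *)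

From mathcomp Require Import all_boot all_order all_algebra.
Set Implicit Arguments. Unset Strict Implicit. Unset Printing Implicit Defensive.
Import Order.TTheory GRing.Theory Num.Theory.
Local Open Scope ring_scope.

(* Abstract linear-algebra setting: V plays the role of h* ~ h = pi_nu(Lambda (x) C),
   with the bilinear form <.,.>; Pi is the set of weights Pi(g). *)

Definition cartan_entry (R : numFieldType) (V : lmodType R) (form : V -> V -> R)
  (l : nat) (alpha : 'I_l.+1 -> V) (i j : 'I_l.+1) : R :=
  2 * form (alpha i) (alpha j) / form (alpha i) (alpha i).

Definition is_gcm (R : numFieldType) (l : nat) (A : 'I_l.+1 -> 'I_l.+1 -> R) : Prop :=
  (forall i, A i i = 2) /\
  (forall i j, i != j -> exists z : int, z <= 0 /\ A i j = z%:~R) /\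
  (forall i j, A i j = 0 <-> A j i = 0).

Definition gcm_indecomposable (R : numFieldType) (l : nat)
  (A : 'I_l.+1 -> 'I_l.+1 -> R) : Prop :=
  forall S : {set 'I_l.+1}, S != set0 -> S != setT ->
    exists i j, [/\ i \in S, j \notin S & A i j != 0].

(* affine type (Kac, Thm 4.3): indecomposable GCM admitting a positive null vector *)
Definition affine_type (R : numFieldType) (l : nat) (A : 'I_l.+1 -> 'I_l.+1 -> R) : Prop :=
  [/\ is_gcm A, gcm_indecomposable A &
      exists u : 'I_l.+1 -> R, (forall j, 0 < u j) /\ (forall i, \sum_j A i j * u j = 0)].

(* alpha_0..alpha_l are distinct nodes of Pi forming a connected component of the
   diagram Phi on Pi (no edges to other nodes of Pi) which is of affine type *)
Definition affine_component (R : numFieldType) (V : lmodType R) (form : V -> V -> R)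
  (Pi : V -> Prop) (l : nat) (alpha : 'I_l.+1 -> V) : Prop :=
  [/\ forall i, Pi (alpha i),
      injective alpha,
      (forall i, form (alpha i) (alpha i) != 0),
      (forall i b, Pi b -> (forall j, b <> alpha j) -> form (alpha i) b = 0) &
      affine_type (cartan_entry form alpha)].

Definition kac_labels (R : numFieldType) (V : lmodType R) (l : nat)
  (alpha : 'I_l.+1 -> V) (a : 'I_l.+1 -> nat) : Prop :=
  [/\ forall i, (0 < a i)%N,
      \big[gcdn/0%N]_i a i = 1%N &
      \sum_i (a i)%:R *: alpha i = 0].

From mathcomp Require Import all_boot all_order all_algebra.
Import Order.TTheory GRing.Theory Num.Theory.
Local Open Scope ring_scope.

(* Shifting every node by h adds (sum_i a_i) h to the relation sum_i a_i alpha_i = 0,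
   so h is the a-weighted mean of the shifted nodes; only positivity of the labels
   is needed to divide by their sum. *)

Lemma sum_scale_shift (R : pzRingType) (V : lmodType R) (n : nat)
    (c : 'I_n -> R) (v : 'I_n -> V) (h : V) :
  \sum_i c i *: (v i + h) = \sum_i c i *: v i + (\sum_i c i) *: h.
Proof.
rewrite scaler_suml -big_split /=.
by apply: eq_bigr => i _; rewrite scalerDr.
Qed.

Lemma sum_natr_pos_neq0 (R : numDomainType) (n : nat) (a : 'I_n.+1 -> nat) :
  (forall i, (0 < a i)%N) -> \sum_i (a i)%:R != 0 :> R.
Proof.
move=> a_pos; apply: lt0r_neq0.
rewrite (bigD1 ord0) //= ltr_pwDl ?ltr0n ?a_pos //.
by apply: sumr_ge0 => i _; rewrite ler0n.
Qed.

Theorem proposition4p4 (R : numFieldType) (V : lmodType R) (form : V -> V -> R)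
  (Pi : V -> Prop) (h : V) (l : nat) (alpha : 'I_l.+1 -> V) (a : 'I_l.+1 -> nat) :
  affine_component form Pi alpha ->
  kac_labels alpha a ->
  let beta := fun i => alpha i + h in
  h = (\sum_i (a i)%:R)^-1 *: \sum_i (a i)%:R *: beta i.
Proof.
move=> _ [a_pos _ null_relation] beta.
rewrite sum_scale_shift null_relation add0r scalerA mulVf ?scale1r //.
exact: sum_natr_pos_neq0.
Qed.
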